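(* Let $M_T$ and $M_{T'}$ be two homomorphous MDPs with deterministic dynamics $T$ and $T'$, common reward $r$, and discount $\gamma\in(0,1)$. Assume $T'\in(T,\varepsilon_m)$, that $r$ is $\lambda_1$-Lipschitz in the action, and that both $T$ and $T'$ are $\lambda_2$-inverse Lipschitz in the action. Then for every $s\in\mathcal S$, $$\left|V^*_T(s)-V^*_{T'}(s)\right|\le\frac{\lambda_1\lambda_2\varepsilon_m}{1-\gamma}.$$
   Context: An MDP here has state space $\mathcal S\subseteq\mathbb R^n$ (with a norm $\|\cdot\|$), action space $\mathcal A$ with the $\ell_1$ norm $\|\cdot\|_1$, deterministic dynamics $T:\mathcal S\times\mathcal A\to\mathcal S$, bounded reward $r(s,a,s')$, initial state distribution $\rho_0$, and discount $\gamma\in(0,1)$. The optimal value function $V^*_T$ is the unique bounded solution of $V^*_T(s)=\max_a\left[r(s,a,T(s,a))+\gamma V^*_T(T(s,a))\right]$ (maxima assumed attained), with $Q^*_T(s,a)=r(s,a,T(s,a))+\gamma V^*_T(T(s,a))$ and $\pi^*_T(s)$ a maximizing action. Two MDPs are homomorphous if they share $\mathcal S,\mathcal A,r,\rho_0,\gamma$ and differ only in the dynamics, with the same sets of reachable next states: for every $s$, $\{T(s,a):a\in\mathcal A\}=\{T'(s,a):a\in\mathcal A\}$. $T'\in(T,\varepsilon_m)$ means $\|T(s,a)-T'(s,a)\|\le\varepsilon_m$ for all $(s,a)$. $r$ is $\lambda_1$-Lipschitz in the action: $|r(s,a_1,s')-r(s,a_2,s')|\le\lambda_1\|a_1-a_2\|_1$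 for all $s,s',a_1,a_2$. $T$ is $\lambda_2$-inverse Lipschitz in the action: $\|a_1-a_2\|_1\le\lambda_2\|T(s,a_1)-T(s,a_2)\|$ for all $s,a_1,a_2$. *)

From mathcomp Require Import all_boot all_order all_algebra.
From mathcomp Require Import reals.
Set Implicit Arguments. Unset Strict Implicit. Unset Printing Implicit Defensive.
Import Order.TTheory GRing.Theory Num.Theory.
Local Open Scope ring_scope.

Section MDP.
Variables (R : realType) (n k : nat).
Local Notation St := 'rV[R]_n.
Local Notation Ac := 'rV[R]_k.

Definition l1norm (a : Ac) : R := \sum_(i < k) `|a ord0 i|.

Record is_norm (N : St -> R) : Prop := IsNorm {
  norm_ge0 : forall x, 0 <= N x;
  norm_eq0 : forall x, N x = 0 -> x = 0;
  normZ : forall (c : R) x, N (c *: x) = `|c| * N x;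
  normD : forall x y, N (x + y) <= N x + N y }.

Definition is_dynamics (S : St -> Prop) (A : Ac -> Prop) (T : St -> Ac -> St) :=
  forall s a, S s -> A a -> S (T s a).

Definition reward_bounded (S : St -> Prop) (A : Ac -> Prop) (r : St -> Ac -> St -> R) :=
  exists B : R, forall s a s', S s -> A a -> S s' -> `|r s a s'| <= B.

Definition bounded_on (S : St -> Prop) (V : St -> R) :=
  exists B : R, forall s, S s -> `|V s| <= B.

Definition Qval (T : St -> Ac -> St) (r : St -> Ac -> St -> R) (gamma : R)
  (V : St -> R) (s : St) (a : Ac) : R :=
  r s a (T s a) + gamma * V (T s a).

(* V is a bounded solution of the Bellman optimality equation (max attained);
   by uniqueness this is V^*_T *)
Definition is_optimal_value (S : St -> Prop) (A : Ac -> Prop) (T : St -> Ac -> St)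
  (r : St -> Ac -> St -> R) (gamma : R) (V : St -> R) :=
  bounded_on S V /\
  forall s, S s ->
    (exists a, A a /\ V s = Qval T r gamma V s a) /\
    (forall a, A a -> Qval T r gamma V s a <= V s).

Definition homomorphous (S : St -> Prop) (A : Ac -> Prop) (T T' : St -> Ac -> St) :=
  forall s, S s -> forall x,
    (exists a, A a /\ T s a = x) <-> (exists a, A a /\ T' s a = x).

Definition dyn_close (N : St -> R) (S : St -> Prop) (A : Ac -> Prop)
  (T T' : St -> Ac -> St) (eps : R) :=
  forall s a, S s -> A a -> N (T s a - T' s a) <= eps.

Definition reward_lipschitz_action (S : St -> Prop) (A : Ac -> Prop)
  (r : St -> Ac -> St -> R) (l1 : R) :=
  forall s s' a1 a2, S s -> S s' -> A a1 -> A a2 ->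
    `|r s a1 s' - r s a2 s'| <= l1 * l1norm (a1 - a2).

Definition inverse_lipschitz_action (N : St -> R) (S : St -> Prop) (A : Ac -> Prop)
  (T : St -> Ac -> St) (l2 : R) :=
  forall s a1 a2, S s -> A a1 -> A a2 ->
    l1norm (a1 - a2) <= l2 * N (T s a1 - T s a2).

End MDP.

(* Let d = sup_s |V*_T(s) - V*_T'(s)|.  The proof is a contraction argument.
   - Since both MDPs reach the same next states, an optimal action a of M_T at
     s can be matched by an action b of M_T' with T'(s,b) = T(s,a).  By inverse
     Lipschitzness of T' and closeness of T and T', |a - b|_1 <= l2 * eps, so the
     rewards of a and b differ by at most l1 * l2 * eps (reward_gap_matched).
   - Comparing the Bellman equation of V at s with the Bellman inequality of V'
     at the matched action gives V s - V' s <= l1 l2 eps + gamma d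
     (optimal_value_gap_step); by symmetry the same holds for V' - V.
   - Hence d <= l1 l2 eps + gamma d, and an abstract contraction lemma on
     suprema of bounded families (contraction_sup_bound) gives
     d <= l1 l2 eps / (1 - gamma). *)
From mathcomp Require Import all_boot all_order all_algebra.
From mathcomp Require Import reals.
From mathcomp Require Import classical_sets lra.
Set Implicit Arguments. Unset Strict Implicit. Unset Printing Implicit Defensive.
Import Order.TTheory GRing.Theory Num.Theory.
Local Open Scope ring_scope.

(* If a bounded family g on P satisfies g <= c + gamma * D for every upper bound
   D of g, with 0 <= gamma < 1, then g is bounded by the fixed point c/(1-gamma):
   apply the hypothesis to the least upper bound. *)
Lemma contraction_sup_bound (R : realType) (X : Type) (P : X -> Prop)
  (g : X -> R) (c gamma : R) :
  0 <= gamma -> gamma < 1 ->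
  (exists B, forall x, P x -> g x <= B) ->
  (forall D, (forall x, P x -> g x <= D) -> forall x, P x -> g x <= c + gamma * D) ->
  forall x, P x -> g x <= c / (1 - gamma).
Proof.
move=> g0 g1 [B gB] contract x Px.
pose E : set R := (g @` P)%classic.
have ubE : has_ubound E by exists B => _ [y Py <-]; exact: gB.
have supE : forall y, P y -> g y <= sup E.
  by move=> y Py; apply: ub_le_sup => //; exists y.
have sup_fix : sup E <= c + gamma * sup E.
  by apply: ge_sup => [|_ [y Py <-]]; [exists (g x), x | exact: contract].
rewrite ler_pdivlMr; last lra.
have := supE x Px; nra.
Qed.

Lemma dyn_close_sym (R : realType) (n k : nat) (N : 'rV[R]_n -> R)
  (S : 'rV[R]_n -> Prop) (A : 'rV[R]_k -> Prop)
  (T T' : 'rV[R]_n -> 'rV[R]_k -> 'rV[R]_n) (eps : R) :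
  is_norm N -> dyn_close N S A T T' eps -> dyn_close N S A T' T eps.
Proof.
move=> normN close s a Ss Aa.
by rewrite -opprB -scaleN1r (normZ normN) normrN1 mul1r; exact: close.
Qed.

Lemma homomorphous_transfer (R : realType) (n k : nat)
  (S : 'rV[R]_n -> Prop) (A : 'rV[R]_k -> Prop)
  (T T' : 'rV[R]_n -> 'rV[R]_k -> 'rV[R]_n) :
  homomorphous S A T T' ->
  (forall s a, S s -> A a -> exists b, A b /\ T' s b = T s a) /\
  (forall s a, S s -> A a -> exists b, A b /\ T s b = T' s a).
Proof.
move=> hom; split=> s a Ss Aa.
- exact: (proj1 (hom s Ss (T s a))) (ex_intro _ a (conj Aa erefl)).
- exact: (proj2 (hom s Ss (T' s a))) (ex_intro _ a (conj Aa erefl)).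
Qed.

Section OneStep.
Variables (R : realType) (n k : nat) (N : 'rV[R]_n -> R).
Variables (S : 'rV[R]_n -> Prop) (A : 'rV[R]_k -> Prop).
Variable r : 'rV[R]_n -> 'rV[R]_k -> 'rV[R]_n -> R.
Variables (gamma eps l1 l2 : R).
Hypotheses (l1_ge0 : 0 <= l1) (l2_ge0 : 0 <= l2).
Hypothesis r_lip : reward_lipschitz_action S A r l1.

(* Two actions leading T' to the point T(s,a) are l2*eps-close in l1 norm
   (T' is inverse Lipschitz and eps-close to T), so their rewards are
   l1*l2*eps-close. *)
Lemma reward_gap_matched (T T' : 'rV[R]_n -> 'rV[R]_k -> 'rV[R]_n) s x a b :
  dyn_close N S A T' T eps -> inverse_lipschitz_action N S A T' l2 ->
  S s -> S x -> A a -> A b -> T' s b = T s a ->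
  `|r s a x - r s b x| <= l1 * l2 * eps.
Proof.
move=> close T'_inv Ss Sx Aa Ab matched.
apply: le_trans (r_lip Ss Sx Aa Ab) _; rewrite -mulrA ler_wpM2l //.
apply: le_trans (T'_inv s a b Ss Aa Ab) _.
by rewrite matched ler_wpM2l //; exact: close.
Qed.

(* One Bellman step: if V - V' <= D on S, then V - V' <= l1 l2 eps + gamma D,
   by evaluating V' at an action of M_T' matching an optimal action of M_T. *)
Lemma optimal_value_gap_step (T T' : 'rV[R]_n -> 'rV[R]_k -> 'rV[R]_n)
  (V V' : 'rV[R]_n -> R) (D : R) :
  0 <= gamma -> is_dynamics S A T ->
  (forall s a, S s -> A a -> exists b, A b /\ T' s b = T s a) ->
  dyn_close N S A T' T eps -> inverse_lipschitz_action N S A T' l2 ->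
  is_optimal_value S A T r gamma V -> is_optimal_value S A T' r gamma V' ->
  (forall x, S x -> V x - V' x <= D) ->
  forall s, S s -> V s - V' s <= l1 * l2 * eps + gamma * D.
Proof.
move=> g0 T_dyn realised close T'_inv [_ V_bell] [_ V'_bell] gapD s Ss.
have [[a [Aa ->]] _] := V_bell s Ss.
have [b [Ab matched]] := realised s a Ss Aa.
have Sx := T_dyn s a Ss Aa.
have V'_ge : Qval T' r gamma V' s b <= V' s := (V'_bell s Ss).2 b Ab.
have reward_gap : r s a (T s a) - r s b (T s a) <= l1 * l2 * eps.
  apply: le_trans (ler_norm _) _.
  exact: reward_gap_matched close T'_inv Ss Sx Aa Ab matched.
have value_gap : gamma * (V (T s a) - V' (T s a)) <= gamma * D.
  by rewrite ler_wpM2l //; exact: gapD.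
move: V'_ge reward_gap value_gap; rewrite /Qval matched; lra.
Qed.

End OneStep.

Theorem mainTheorem1 (R : realType) (n k : nat) (N : 'rV[R]_n -> R)
  (S : 'rV[R]_n -> Prop) (A : 'rV[R]_k -> Prop)
  (T T' : 'rV[R]_n -> 'rV[R]_k -> 'rV[R]_n)
  (r : 'rV[R]_n -> 'rV[R]_k -> 'rV[R]_n -> R)
  (gamma eps l1 l2 : R) (V V' : 'rV[R]_n -> R) :
  is_norm N ->
  0 < gamma -> gamma < 1 ->
  is_dynamics S A T -> is_dynamics S A T' ->
  reward_bounded S A r ->
  homomorphous S A T T' ->
  dyn_close N S A T T' eps ->
  0 <= l1 -> 0 <= l2 ->
  reward_lipschitz_action S A r l1 ->
  inverse_lipschitz_action N S A T l2 ->
  inverse_lipschitz_action N S A T' l2 ->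
  is_optimal_value S A T r gamma V ->
  is_optimal_value S A T' r gamma V' ->
  forall s, S s -> `|V s - V' s| <= l1 * l2 * eps / (1 - gamma).
Proof.
move=> normN g0 g1 T_dyn T'_dyn _ hom close l1_ge0 l2_ge0 r_lip T_inv T'_inv
  optV optV'.
have [realised realised'] := homomorphous_transfer hom.
have close' := dyn_close_sym normN close.
apply: (contraction_sup_bound (ltW g0) g1).
- have [[B1 hB1] _] := optV; have [[B2 hB2] _] := optV'.
  exists (B1 + B2) => t St.
  by apply: le_trans (ler_normB _ _) _; apply: lerD; [exact: hB1 | exact: hB2].
- move=> D gapD t St; rewrite ler_norml; apply/andP; split.
  + rewrite lerNl opprB.
    apply: (optimal_value_gap_step l1_ge0 l2_ge0 r_lip (ltW g0) T'_dyn realised'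
      close T_inv optV' optV) => // x Sx.
    by apply: le_trans (ler_norm _) _; rewrite distrC; exact: gapD.
  + apply: (optimal_value_gap_step l1_ge0 l2_ge0 r_lip (ltW g0) T_dyn realised
      close' T'_inv optV optV') => // x Sx.
    exact: le_trans (ler_norm _) (gapD x Sx).
Qed.
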